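(* Let $\mathcal{H}$ be a separable Hilbert space, $\{\mathcal{H}_j\}_{j\in J}$ ($J\subseteq\mathbb{Z}$) a sequence of closed subspaces of $\mathcal{H}$, and $K\in\mathcal{B}(\mathcal{H})$ with closed range $\mathcal{R}(K)$. Let $\{\Lambda_j\}_{j\in J}$ and $\{\Theta_j\}_{j\in J}$ be $g$-Bessel sequences with $\Lambda_j,\Theta_j\in\mathcal{B}(\mathcal{H},\mathcal{H}_j)$, and let $U:\mathcal{R}(K)\to\mathcal{R}(K)$, $Uf=\sum_{j\in J}\Lambda_j^{\ast}\Theta_jf$, satisfy $\|I_{\mathcal{R}(K)}-U\|<1$ (i.e. $\{\Theta_j\}$ is an approximate $K$-$g$-dual of $\{\Lambda_j\}$). Then for every $N\in\mathbb{N}$ the sequence $\{\gamma_j^{(N)}\}_{j\in J}$, $\gamma_j^{(N)}=\sum_{n=0}^{N}\Theta_j(I_{\mathcal{R}(K)}-U)^n:\mathcal{R}(K)\to\mathcal{H}_j$, is an approximate $K$-$g$-dual of $\{\Lambda_j\}_{j\in J}$, i.e. it is a $g$-Bessel sequence on $\mathcal{R}(K)$ and $\|I_{\mathcal{R}(K)}-V_N\|<1$, where $V_Nf=\sum_{j\in J}\Lambda_j^{\ast}\gamma_j^{(N)}f$ for $f\in\mathcal{R}(K)$.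
   Context: A sequence $\{\Lambda_j\in\mathcal{B}(\mathcal{H},\mathcal{H}_j)\}_{j\in J}$ is $g$-Bessel if there is $B>0$ with $\sum_{j\in J}\|\Lambda_jf\|^2\leq B\|f\|^2$ for all $f$ in its domain; $T_\Lambda:\{g_j\}\mapsto\sum_j\Lambda_j^\ast g_j$ denotes its synthesis operator, so $U=T_\Lambda T_\Theta^\ast$ restricted to $\mathcal{R}(K)$. Two $g$-Bessel sequences are approximately dual $K$-$g$-frames if $\|I_{\mathcal{R}(K)}-T_\Lambda T_\Theta^\ast\|<1$, where $T_\Lambda T_\Theta^\ast$ is regarded as an operator on $\mathcal{R}(K)$. *)

From HB Require Import structures.
From mathcomp Require Import all_boot all_order all_algebra.
From mathcomp Require Import boolp classical_sets reals constructive_ereal ereal esum.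
From mathcomp Require Import complex.

Set Implicit Arguments.
Unset Strict Implicit.
Unset Printing Implicit Defensive.

Import Order.TTheory GRing.Theory Num.Theory.
Local Open Scope classical_set_scope.
Local Open Scope ring_scope.

(* A complex Hilbert space is represented by a C-vector space H (C = R[i]
   for a real type R) together with a map ip : H -> H -> C satisfying the
   inner-product axioms (linear in the first argument) and such that H is
   complete for the induced norm. *)

Section Hilbert.
Variable R : realType.
Variable H : lmodType R[i].
Variable ip : H -> H -> R[i].

Definition is_inner_product : Prop :=
  [/\ (forall (a : R[i]) (x y z : H), ip (a *: x + y) z = a * ip x z + ip y z),
      (forall x y : H, ip y x = conjc (ip x y)),
      (forall x : H, 0 <= ip x x) &
      (forall x : H, ip x x = 0 -> x = 0)].

Definition hnorm (x : H) : R := Num.sqrt (complex.Re (ip x x)).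

Definition hcvg (u : nat -> H) (x : H) : Prop :=
  forall e : R, 0 < e -> exists N : nat, forall n, (N <= n)%N -> hnorm (u n - x) < e.

Definition hcauchy (u : nat -> H) : Prop :=
  forall e : R, 0 < e -> exists N : nat,
    forall m n, (N <= m)%N -> (N <= n)%N -> hnorm (u m - u n) < e.

Definition is_hilbert : Prop :=
  is_inner_product /\ (forall u : nat -> H, hcauchy u -> exists x, hcvg u x).

Definition separable : Prop :=
  exists d : nat -> H, forall (x : H) (e : R), 0 < e -> exists n, hnorm (x - d n) < e.

Definition is_closed_set (S : set H) : Prop :=
  forall (u : nat -> H) (x : H), (forall n, S (u n)) -> hcvg u x -> S x.

Definition closed_subspace (S : set H) : Prop :=
  [/\ S 0, (forall (a : R[i]) x y, S x -> S y -> S (a *: x + y)) & is_closed_set S].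

Definition is_linear (T : H -> H) : Prop :=
  forall (a : R[i]) (x y : H), T (a *: x + y) = a *: T x + T y.

Definition bounded_op (T : H -> H) : Prop :=
  is_linear T /\ exists M : R, forall x, hnorm (T x) <= M * hnorm x.

Definition bounded_op_into (S : set H) (T : H -> H) : Prop :=
  bounded_op T /\ forall x, S (T x).

Definition is_adjoint (T Ts : H -> H) : Prop :=
  forall x y, ip (T x) y = ip x (Ts y).

(* unconditional convergence of the series sum_{j in J} u j to s in H:
   the net of finite partial sums over finite subsets of J converges to s *)
Definition hasSum (J : set int) (u : int -> H) (s : H) : Prop :=
  forall e : R, 0 < e -> exists F0 : seq int,
    [/\ uniq F0, (forall j, j \in F0 -> J j) &
      forall F : seq int, uniq F -> (forall j, j \in F -> J j) ->
        (forall j, j \in F0 -> j \in F) ->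
        hnorm (\sum_(j <- F) u j - s) < e].

Definition gBessel_on (S : set H) (J : set int) (L : int -> H -> H) : Prop :=
  exists B : R, 0 < B /\ forall f, S f ->
    (\esum_(j in J) ((hnorm (L j f)) ^+ 2)%:E <= (B * hnorm f ^+ 2)%:E)%E.

(* operator norm of T restricted to the subspace S, in the extended reals
   (it is +oo when T is unbounded on S) *)
Definition opnorm_on (S : set H) (T : H -> H) : \bar R :=
  ereal_sup ((fun f => (hnorm (T f))%:E) @` [set f | S f /\ hnorm f <= 1]).

End Hilbert.

(* With T := I - U on R(K), the terms U T^n = T^n - T^(n+1) telescope, so
   V_N = \sum_(n <= N) U T^n = I - T^(N+1) and I - V_N = T^(N+1).  As U is
   homogeneous and ||T|| < 1 on R(K), T does not increase norms there, hence
   ||T^(N+1)|| <= ||T|| < 1.  Each gamma_j f is a sum of N+1 terms Theta_j T^n f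
   with ||T^n f|| <= ||f||, so (sum of N+1 terms)^2 <= (N+1) (sum of squares)
   makes {gamma_j} g-Bessel with bound (N+1)^2 B_Theta. *)

From HB Require Import structures.
From mathcomp Require Import all_boot all_order all_algebra.
From mathcomp Require Import boolp classical_sets reals constructive_ereal ereal esum.
From mathcomp Require Import complex.
From mathcomp Require Import ring lra.
Import Order.TTheory GRing.Theory Num.Theory.
Set Implicit Arguments.
Unset Strict Implicit.
Unset Printing Implicit Defensive.
Local Open Scope classical_set_scope.
Local Open Scope complex_scope.
Local Open Scope ring_scope.

Lemma sqr_sum_le (R : realFieldType) m (a : nat -> R) :
  (\sum_(i < m) a i) ^+ 2 <= m%:R * \sum_(i < m) a i ^+ 2.
Proof.
elim: m => [|m IH]; first by rewrite !big_ord0 expr0n mul0r.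
rewrite !big_ord_recr /=.
set S := \sum_(i < m) a i in IH *; set Q := \sum_(i < m) _ in IH *.
have Q0 : 0 <= Q by rewrite sumr_ge0 // => i _; rewrite sqr_ge0.
suff cross : 2 * S * a m <= Q + m%:R * a m ^+ 2.
  by rewrite -natr1 sqrrD mulr2n; lra.
have [m0|m_gt0] := posnP m.
  have S0 : S = 0.
    by apply/eqP; rewrite -sqrf_eq0 eq_le sqr_ge0 andbT; move: IH; rewrite m0 mul0r.
  by rewrite S0 m0 !(mulr0, mul0r) addr0.
have mR : 0 < m%:R :> R by rewrite ltr0n.
rewrite -subr_ge0 -(pmulr_rge0 _ mR).
have -> : m%:R * (Q + m%:R * a m ^+ 2 - 2 * S * a m) =
          (m%:R * Q - S ^+ 2) + (S - m%:R * a m) ^+ 2 by ring.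
by rewrite addr_ge0 ?sqr_ge0 // subr_ge0.
Qed.

Lemma sumr_iter_sub (V : zmodType) (U : V -> V) (f : V) m :
  \sum_(n < m) U (iter n (fun g => g - U g) f) = f - iter m (fun g => g - U g) f.
Proof.
set T := fun g => g - U g.
have := telescope_sumr (fun n => iter n T f) (leq0n m); rewrite big_mkord /= => tele.
rewrite -opprB -tele -sumrN.
by apply: eq_bigr => n _; rewrite /= /T opprB subKr.
Qed.

Section InnerProduct.
Variables (R : realType) (H : lmodType R[i]) (ip : H -> H -> R[i]).
Hypothesis ip_inner : is_inner_product ip.

(* Only real scalars occur below, and for them [Re <x, y>] is a real inner product. *)
Definition rip (x y : H) : R := complex.Re (ip x y).

Lemma ripDZl (a : R) x y z : rip (a%:C *: x + y) z = a * rip x z + rip y z.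
Proof.
case: ip_inner => lin _ _ _; rewrite /rip lin.
by case: (ip x z) => ? ?; case: (ip y z) => ? ? /=; rewrite mul0r subr0.
Qed.

Lemma ripC x y : rip x y = rip y x.
Proof. by case: ip_inner => _ sym _ _; rewrite /rip sym; case: (ip _ _). Qed.

Lemma rip_ge0 x : 0 <= rip x x.
Proof. by case: ip_inner => _ _ pos _; have := pos x; rewrite lecE => /andP[]. Qed.

Lemma rip_eq0 x : rip x x = 0 -> x = 0.
Proof.
case: ip_inner => _ _ pos def; rewrite /rip => re0; apply: def.
by move: (ger0_Im (pos x)) re0; case: (ip x x) => ? ? /= -> ->.
Qed.

Lemma rip0l z : rip 0 z = 0.
Proof.
have := ripDZl 1 0 0 z; rewrite scaler0 addr0 mul1r => h.
by apply: (addrI (rip 0 z)); rewrite addr0 -h.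
Qed.

Lemma ripDl x y z : rip (x + y) z = rip x z + rip y z.
Proof. by have := ripDZl 1 x y z; rewrite scale1r mul1r. Qed.

Lemma ripZl (a : R) x z : rip (a%:C *: x) z = a * rip x z.
Proof. by rewrite -[_ *: x]addr0 ripDZl rip0l addr0. Qed.

Lemma ripNl x z : rip (- x) z = - rip x z.
Proof. by rewrite -scaleN1r -(rmorphN1 (real_complex R)) ripZl mulN1r. Qed.

Lemma rip0r z : rip z 0 = 0.
Proof. by rewrite ripC rip0l. Qed.

Lemma ripDr x y z : rip z (x + y) = rip z x + rip z y.
Proof. by rewrite ripC ripDl !(ripC z). Qed.

Lemma ripZr (a : R) x z : rip z (a%:C *: x) = a * rip z x.
Proof. by rewrite ripC ripZl ripC. Qed.

Lemma rip_sqr_le x y : rip x y ^+ 2 <= rip x x * rip y y.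
Proof.
have [->|y0] := eqVneq y 0; first by rewrite rip0r rip0l expr0n /= mulr0.
have ryy : 0 < rip y y by rewrite lt_def rip_ge0 (contra_neq (@rip_eq0 y)).
(* Expand [0 <= |x + t y|^2] at the minimising [t]. *)
set t := - rip x y / rip y y.
have := rip_ge0 (x + t%:C *: y).
rewrite !(ripDl, ripDr, ripZl, ripZr) (ripC y x).
have -> : rip x x + t * rip x y + (t * rip x y + t * (t * rip y y)) =
          rip x x - rip x y ^+ 2 / rip y y by rewrite /t; field; rewrite gt_eqF.
by rewrite subr_ge0 ler_pdivrMr // mulrC.
Qed.

Lemma hnorm_ge0 x : 0 <= hnorm ip x.
Proof. exact: sqrtr_ge0. Qed.

Lemma hnorm_sqr x : hnorm ip x ^+ 2 = rip x x.
Proof. by rewrite sqr_sqrtr // rip_ge0. Qed.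

Lemma hnorm0 : hnorm ip 0 = 0.
Proof. by rewrite /hnorm -/(rip 0 0) rip0l sqrtr0. Qed.

Lemma hnorm_eq0 x : hnorm ip x = 0 -> x = 0.
Proof. by move=> h; apply: rip_eq0; rewrite -hnorm_sqr h expr0n. Qed.

Lemma hnormZ (a : R) x : hnorm ip (a%:C *: x) = `|a| * hnorm ip x.
Proof.
rewrite /hnorm -!/(rip _ _) ripZl ripZr mulrA -expr2.
by rewrite sqrtrM ?sqr_ge0 // sqrtr_sqr.
Qed.

Lemma hnormN x : hnorm ip (- x) = hnorm ip x.
Proof.
by rewrite -scaleN1r -(rmorphN1 (real_complex R)) hnormZ normrN normr1 mul1r.
Qed.

Lemma ler_hnormD x y : hnorm ip (x + y) <= hnorm ip x + hnorm ip y.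
Proof.
have rxy : rip x y <= hnorm ip x * hnorm ip y.
  have := rip_sqr_le x y; rewrite -!hnorm_sqr.
  have := mulr_ge0 (hnorm_ge0 x) (hnorm_ge0 y); nra.
rewrite -(ler_pXn2r (n := 2)) ?nnegrE ?addr_ge0 ?hnorm_ge0 //.
rewrite hnorm_sqr !(ripDl, ripDr) (ripC y x) sqrrD -!hnorm_sqr; lra.
Qed.

Lemma ler_hnormB x y : hnorm ip (x - y) <= hnorm ip x + hnorm ip y.
Proof. by rewrite -(hnormN y) ler_hnormD. Qed.

Lemma ler_hnorm_sum I (r : seq I) (f : I -> H) :
  hnorm ip (\sum_(i <- r) f i) <= \sum_(i <- r) hnorm ip (f i).
Proof.
elim: r => [|i r IH]; first by rewrite !big_nil hnorm0.
by rewrite !big_cons (le_trans (ler_hnormD _ _)) // lerD2l.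
Qed.

Section Series.
Variable J : set int.

Lemma hasSum_window u v s t e : 0 < e -> hasSum ip J u s -> hasSum ip J v t ->
  exists F0 : seq int, [/\ uniq F0, (forall j, j \in F0 -> J j) &
    forall F : seq int, uniq F -> (forall j, j \in F -> J j) ->
      (forall j, j \in F0 -> j \in F) ->
      hnorm ip (\sum_(j <- F) u j - s) < e /\ hnorm ip (\sum_(j <- F) v j - t) < e].
Proof.
move=> e0 /(_ e e0) [F1 [uF1 JF1 hF1]] /(_ e e0) [F2 [uF2 JF2 hF2]].
exists (undup (F1 ++ F2)); split; first exact: undup_uniq.
  by move=> j; rewrite mem_undup mem_cat => /orP[/JF1|/JF2].
move=> F uF JF sF; split.
  by apply: hF1 => // j jF1; apply: sF; rewrite mem_undup mem_cat jF1.
by apply: hF2 => // j jF2; apply: sF; rewrite mem_undup mem_cat jF2 orbT.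
Qed.

Lemma hasSum_unique u s t : hasSum ip J u s -> hasSum ip J u t -> s = t.
Proof.
move=> hs ht; apply/eqP; rewrite -subr_eq0; apply/eqP/hnorm_eq0/eqP.
apply: contraT => d0; have e0 : 0 < hnorm ip (s - t) / 2.
  by rewrite divr_gt0 // lt_def d0 hnorm_ge0.
have [F [uF JF /(_ F uF JF (fun _ => id)) [hs' ht']]] := hasSum_window e0 hs ht.
have := ler_hnormB (\sum_(j <- F) u j - t) (\sum_(j <- F) u j - s).
rewrite opprB addrC addrA subrK; lra.
Qed.

Lemma hasSumD u v s t : hasSum ip J u s -> hasSum ip J v t ->
  hasSum ip J (fun j => u j + v j) (s + t).
Proof.
move=> hs ht e e0; have e20 : 0 < e / 2 by rewrite divr_gt0.
have [F0 [uF0 JF0 hF0]] := hasSum_window e20 hs ht.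
exists F0; split => // F uF JF sF; have [hs' ht'] := hF0 F uF JF sF.
rewrite big_split /= opprD addrACA.
by apply: le_lt_trans (ler_hnormD _ _) _; lra.
Qed.

Lemma hasSumZ (a : R) u s : hasSum ip J u s ->
  hasSum ip J (fun j => a%:C *: u j) (a%:C *: s).
Proof.
move=> hs e e0; have a0 : 0 < `|a| + 1 by rewrite ltr_wpDl.
have [F0 [uF0 JF0 hF0]] := hs _ (divr_gt0 e0 a0).
exists F0; split => // F uF JF sF; have := hF0 F uF JF sF.
rewrite -scaler_sumr -scalerBr hnormZ ltr_pdivlMr // => h.
by apply: le_lt_trans h; rewrite mulrDr mulr1 mulrC lerDl hnorm_ge0.
Qed.

Lemma eq_hasSum u v s : (forall j, J j -> u j = v j) ->
  hasSum ip J u s -> hasSum ip J v s.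
Proof.
move=> uv hs e e0; have [F0 [uF0 JF0 hF0]] := hs _ e0.
exists F0; split => // F uF JF sF.
by rewrite -(eq_big_seq _ (fun j jF => uv j (JF j jF))); apply: hF0.
Qed.

Lemma hasSum0 : hasSum ip J (fun _ => 0) 0.
Proof. by move=> e e0; exists [::]; split => // F _ _ _; rewrite big1 // subr0 hnorm0. Qed.

Lemma hasSum_sum m (u : nat -> int -> H) (s : nat -> H) :
  (forall n, hasSum ip J (u n) (s n)) ->
  hasSum ip J (fun j => \sum_(n < m) u n j) (\sum_(n < m) s n).
Proof.
move=> hs; elim: m => [|m IH].
  by rewrite big_ord0; apply: eq_hasSum hasSum0 => j _; rewrite big_ord0.
rewrite big_ord_recr; apply: eq_hasSum (hasSumD IH (hs m)) => j _.
by rewrite big_ord_recr.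
Qed.

End Series.

Definition real_linear (f : H -> H) : Prop :=
  forall (a : R) x y, f (a%:C *: x + y) = a%:C *: f x + f y.

Lemma real_linear0 f : real_linear f -> f 0 = 0.
Proof.
move=> lf; have := lf 1 0 0; rewrite scaler0 addr0 scale1r => h.
by apply: (addrI (f 0)); rewrite addr0 -h.
Qed.

Lemma real_linearD f x y : real_linear f -> f (x + y) = f x + f y.
Proof. by move=> lf; have := lf 1 x y; rewrite !scale1r. Qed.

Lemma real_linearZ f (a : R) x : real_linear f -> f (a%:C *: x) = a%:C *: f x.
Proof. by move=> lf; rewrite -[_ *: x]addr0 lf real_linear0 // addr0. Qed.

Lemma real_linear_sum f I (r : seq I) (g : I -> H) : real_linear f ->
  f (\sum_(i <- r) g i) = \sum_(i <- r) f (g i).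
Proof.
move=> lf; elim: r => [|i r IH]; first by rewrite !big_nil real_linear0.
by rewrite !big_cons real_linearD // IH.
Qed.

Lemma linear_real_linear f : is_linear f -> real_linear f.
Proof. by move=> lf a x y; rewrite lf. Qed.

Lemma real_linear_comp f g : real_linear f -> real_linear g -> real_linear (f \o g).
Proof. by move=> lf lg a x y; rewrite /= lg lf. Qed.

Lemma range_linearZ (K : H -> H) :
  is_linear K -> forall (a : R[i]) f, range K f -> range K (a *: f).
Proof.
move=> lK a _ [x _ <-]; exists (a *: x) => //.
by rewrite -[a *: x]addr0 lK (real_linear0 (linear_real_linear lK)) addr0.
Qed.

Lemma range_linearB (K : H -> H) :
  is_linear K -> forall f g, range K f -> range K g -> range K (f - g).
Proof.
by move=> lK _ _ [x _ <-] [y _ <-]; exists (-1 *: y + x); rewrite // lK scaleN1r addrC.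
Qed.

Lemma adjoint_real_linear T Ts : is_adjoint ip T Ts -> real_linear Ts.
Proof.
move=> adj a x y; set l := Ts _; set r := _ + _.
have ripTs z w : rip z (Ts w) = rip (T z) w by rewrite /rip adj.
have lr z : rip z l = rip z r by rewrite /l /r ripTs !(ripDr, ripZr) !ripTs.
apply/eqP; rewrite -subr_eq0; apply/eqP/rip_eq0.
by rewrite ripDl ripNl !(ripC _ (l - r)) lr subrr.
Qed.

Lemma hasSum_opZ (J : set int) (P : set H) (A : int -> H -> H) (U : H -> H) :
  (forall j, J j -> real_linear (A j)) ->
  (forall (a : R) f, P f -> P (a%:C *: f)) ->
  (forall f, P f -> hasSum ip J (fun j => A j f) (U f)) ->
  forall (a : R) f, P f -> U (a%:C *: f) = a%:C *: U f.
Proof.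
move=> lA PZ hU a f Pf; apply: (hasSum_unique (hU _ (PZ a f Pf))).
apply: eq_hasSum (hasSumZ a (hU f Pf)) => j Jj.
by rewrite (real_linearZ _ _ (lA j Jj)).
Qed.

Lemma hnorm_le_opnorm_on (P : set H) (T : H -> H) (c : R) :
  (forall (a : R) f, P f -> P (a%:C *: f)) ->
  (forall (a : R) f, P f -> T (a%:C *: f) = a%:C *: T f) ->
  (opnorm_on ip P T <= c%:E)%E ->
  forall f, P f -> hnorm ip (T f) <= c * hnorm ip f.
Proof.
move=> PZ TZ Tc f Pf; have [f0|fn0] := eqVneq (hnorm ip f) 0.
  have {1}-> : f = 0%:C *: f by rewrite (hnorm_eq0 f0) scaler0.
  by rewrite f0 mulr0 TZ // rmorph0 scale0r hnorm0.
have f_gt0 : 0 < hnorm ip f by rewrite lt_def fn0 hnorm_ge0.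
set u := (hnorm ip f)^-1%:C *: f.
have u_le1 : hnorm ip u <= 1 by rewrite hnormZ ger0_norm ?invr_ge0 ?hnorm_ge0 // mulVf.
have Tu_le : hnorm ip (T u) <= c.
  rewrite -lee_fin; apply: le_trans Tc; apply: ereal_sup_ubound.
  by exists u => //; split => //; apply: PZ.
have -> : T f = (hnorm ip f)%:C *: T u.
  rewrite -TZ; last exact: PZ.
  by rewrite /u scalerA -rmorphM mulfV // rmorph1 scale1r.
by rewrite hnormZ ger0_norm ?hnorm_ge0 // mulrC ler_pM2r.
Qed.

Section Contraction.
Variables (P : set H) (T : H -> H).
Hypothesis PT : forall f, P f -> P (T f).
Hypothesis T_le : forall f, P f -> hnorm ip (T f) <= hnorm ip f.

Lemma iter_stable n f : P f -> P (iter n T f).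
Proof. by elim: n => [|n IH] Pf //=; apply/PT/IH. Qed.

Lemma hnorm_iter_le n f : P f -> hnorm ip (iter n T f) <= hnorm ip f.
Proof.
elim: n => [|n IH] Pf //=.
exact: le_trans (T_le (iter_stable n Pf)) (IH Pf).
Qed.

Lemma opnorm_on_iter_le n : (opnorm_on ip P (iter n.+1 T) <= opnorm_on ip P T)%E.
Proof.
apply: ge_ereal_sup => _ [f [Pf f_le1] <-]; apply: ereal_sup_ubound.
exists (iter n T f) => //; split; first exact: iter_stable.
exact: le_trans (hnorm_iter_le n Pf) f_le1.
Qed.

End Contraction.

Lemma gBessel_on_sum (S S' : set H) (J : set int) (L : int -> H -> H)
    (g : nat -> H -> H) m :
  (0 < m)%N -> gBessel_on ip S' J L ->
  (forall n f, S f -> S' (g n f)) ->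
  (forall n f, S f -> hnorm ip (g n f) <= hnorm ip f) ->
  gBessel_on ip S J (fun j f => \sum_(n < m) L j (g n f)).
Proof.
move=> m_gt0 [B [B_gt0 LB]] Sg g_le; exists (m%:R * m%:R * B).
split; first by rewrite !mulr_gt0 // ltr0n.
move=> f Sf; set x := fun j n => hnorm ip (L j (g n f)) ^+ 2.
have x_ge0 j n : (0 <= (x j n)%:E)%E by rewrite lee_fin sqr_ge0.
(* [m * s] is written [\sum_(k < m) s] so that [esum_sum] can move it out of the [esum]. *)
have sum_le j : hnorm ip (\sum_(n < m) L j (g n f)) ^+ 2 <=
                \sum_(k < m) \sum_(n < m) x j n.
  rewrite sumr_const card_ord -mulr_natl.
  apply: le_trans (sqr_sum_le _ (fun n => hnorm ip (L j (g n f)))).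
  rewrite ler_pXn2r ?nnegrE ?hnorm_ge0 ?sumr_ge0 //; first exact: ler_hnorm_sum.
  by move=> n _; apply: hnorm_ge0.
apply: (@le_trans _ _ (\esum_(j in J) \sum_(k < m) \sum_(n < m) (x j n)%:E)%E).
  by apply: le_esum => j _; rewrite !sumEFin lee_fin sum_le.
rewrite esum_sum; last by move=> j k _ _; rewrite sume_ge0.
under eq_bigr do rewrite esum_sum //.
have esum_le : (\sum_(k < m) \sum_(n < m) \esum_(j in J) (x j n)%:E <=
                \sum_(k < m) \sum_(n < m) (B * hnorm ip f ^+ 2)%:E)%E.
  apply: lee_sum => k _; apply: lee_sum => n _.
  apply: le_trans (LB _ (Sg n f Sf)) _; rewrite lee_fin ler_pM2l //.
  by rewrite ler_pXn2r ?nnegrE ?hnorm_ge0 ?g_le.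
apply: (le_trans esum_le).
by rewrite !sumEFin lee_fin !sumr_const card_ord -!mulrA !mulr_natl.
Qed.

End InnerProduct.

Theorem mainTheorem6 (R : realType) (H : lmodType R[i]) (ip : H -> H -> R[i])
  (J : set int) (Hs : int -> set H) (K : H -> H)
  (Lam Th LamAdj : int -> H -> H) (U : H -> H) :
  is_hilbert ip -> separable ip ->
  (forall j, J j -> closed_subspace ip (Hs j)) ->
  bounded_op ip K -> is_closed_set ip (range K) ->
  (forall j, J j -> bounded_op_into ip (Hs j) (Lam j)) ->
  (forall j, J j -> bounded_op_into ip (Hs j) (Th j)) ->
  (forall j, J j -> is_adjoint ip (Lam j) (LamAdj j)) ->
  gBessel_on ip setT J Lam -> gBessel_on ip setT J Th ->
  (forall f, range K f -> hasSum ip J (fun j => LamAdj j (Th j f)) (U f)) ->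
  (forall f, range K f -> range K (U f)) ->
  (opnorm_on ip (range K) (fun f => (f - U f)%R) < 1%:E)%E ->
  forall N : nat,
    let gamma := fun (j : int) (f : H) =>
      \sum_(n < N.+1) Th j (iter n (fun g => g - U g) f) in
    gBessel_on ip (range K) J gamma /\
    exists V : H -> H,
      [/\ (forall f, range K f -> hasSum ip J (fun j => LamAdj j (gamma j f)) (V f)),
          (forall f, range K f -> range K (V f)) &
          (opnorm_on ip (range K) (fun f => (f - V f)%R) < 1%:E)%E].
Proof.
move=> [ip_inner _] _ _ [K_lin _] _ _ Th_bnd Adj _ Th_Bessel U_sum U_range T_lt1 N gamma.
set T := fun g => g - U g in T_lt1 gamma *; set P := range K.
have PZ (a : R) f : P f -> P (a%:C *: f) by apply: range_linearZ.
have PT f : P f -> P (T f) by move=> Pf; apply: range_linearB => //; apply: U_range.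
have Adj_lin j : J j -> real_linear (LamAdj j).
  by move=> Jj; apply: adjoint_real_linear ip_inner _ _ (Adj j Jj).
have UZ : forall (a : R) f, P f -> U (a%:C *: f) = a%:C *: U f.
  apply: (hasSum_opZ ip_inner (A := fun j => LamAdj j \o Th j) _ PZ U_sum) => j Jj.
  by apply: real_linear_comp (Adj_lin j Jj) (linear_real_linear (Th_bnd j Jj).1.1).
have T_le f : P f -> hnorm ip (T f) <= hnorm ip f.
  move=> Pf; rewrite -[X in _ <= X]mul1r.
  apply: (hnorm_le_opnorm_on ip_inner PZ _ (ltW T_lt1) Pf) => a g Pg.
  by rewrite /T UZ // scalerBr.
split.
  apply: (gBessel_on_sum ip_inner (g := fun n => iter n T) (m := N.+1) _ Th_Bessel)
    => // n f Pf /=.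
  exact (hnorm_iter_le PT T_le n Pf).
exists (fun f => f - iter N.+1 T f); split.
- move=> f Pf; rewrite -(sumr_iter_sub U f N.+1).
  have := hasSum_sum ip_inner N.+1 (fun n => U_sum _ (iter_stable PT n Pf)).
  apply: eq_hasSum => j Jj.
  by rewrite /gamma (real_linear_sum _ _ (Adj_lin j Jj)).
- by move=> f Pf; apply: range_linearB => //; apply: iter_stable.
- rewrite (_ : (fun f => f - (f - iter N.+1 T f)) = iter N.+1 T); last first.
    by apply/funext => f; rewrite subKr.
  exact: le_lt_trans (opnorm_on_iter_le PT T_le N) T_lt1.
Qed.
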